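(* Let $n,G$ be positive integers with $2^n$ dividing $G$, let $H=G/2^n$, and let $X=\{A\subseteq G: |A|=H\}$. For $\mathcal A\subseteq X$ define \[\|\mathcal A\|_2=\min\{|x| : x\subseteq G \text{ and } x\not\subseteq a \text{ for all } a\in\mathcal A\}.\] Let $k$ be an integer with $1\leq k\leq H$. If $\mathcal A\subseteq X$ is non-empty and $\|\mathcal A\|_2\leq k$, then \[\frac{|\mathcal A|}{|X|}\leq 1-\prod_{i=0}^{k-1}\frac{H-i}{G-i}.\] Moreover, there is a set $\mathcal A^*\subseteq X$ with $\|\mathcal A^*\|_2=k$ for which equality holds in this inequality.
   Context: Natural numbers are identified with the set of their predecessors, so $G=\{0,1,\ldots,G-1\}$ and $X$ is the family of all $H$-element subsets of $G$. *)

From mathcomp Require Import all_boot all_order all_algebra.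
Set Implicit Arguments. Unset Strict Implicit. Unset Printing Implicit Defensive.
Import Order.TTheory GRing.Theory Num.Theory.

(* The ground set G = {0,...,G-1} is the finite type 'I_G. *)

Definition ksets (G H : nat) : {set {set 'I_G}} := [set A : {set 'I_G} | #|A| == H].

(* ||F||_2 = min { |x| : x subset of G, x not contained in any a in F }.
   (The min is over a finite set; if that set were empty the value would be G.+1,
    but this never happens for the families considered, since the full set
    [set: 'I_G] is not contained in any H-subset when H < G.) *)
Definition norm2 (G : nat) (F : {set {set 'I_G}}) : nat :=
  \big[minn/G.+1]_(x : {set 'I_G} | [forall a in F, ~~ (x \subset a)]) #|x|.

From HB Require Import structures.
From mathcomp Require Import all_boot all_order all_algebra.
From mathcomp Require Import zify ring.
Import Order.TTheory GRing.Theory Num.Theory.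
Set Implicit Arguments. Unset Strict Implicit. Unset Printing Implicit Defensive.

(* If [norm2 F <= k], some set [x] with [|x| <= k] lies in no member of [F], so [F]
   misses every H-set containing [x].  These form a fraction
   [C(G - |x|, H - |x|) / C(G, H) = prod_(i < |x|) (H - i) / (G - i)] of all H-sets,
   and the product only decreases as [|x|] grows to [k].  Equality holds for the
   family of H-sets not containing a fixed k-set [x]: a set [y] smaller than [x]
   misses some [z] in [x], and [y] extends to an H-set avoiding [z], which belongs
   to the family; hence the family has norm exactly [k]. *)

Section FiniteSets.
Variable T : finType.
Implicit Types (x y C : {set T}).

Lemma exists_card_between y C m : y \subset C -> (#|y| <= m <= #|C|)%N ->
  exists a : {set T}, [/\ y \subset a, a \subset C & #|a| = m].
Proof.
move=> yC /andP[ym mC].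
have : (0 < #|[set b : {set T} | b \subset C :\: y & #|b| == m - #|y|]|)%N.
  by rewrite cards_draws bin_gt0 cardsD (setIidPr yC) leq_sub2r.
rewrite card_gt0 => /set0Pn[b]; rewrite inE subsetD => /andP[/andP[bC bNy] /eqP bm].
exists (y :|: b); split; [exact: subsetUl | by rewrite subUset yC | ].
rewrite disjoint_sym in bNy.
by rewrite cardsU (disjoint_setI0 bNy) cards0 subn0 bm subnKC.
Qed.

Lemma card_supsets x m : (#|x| <= m)%N ->
  #|[set a : {set T} | #|a| == m & x \subset a]| = 'C(#|T| - #|x|, m - #|x|).
Proof.
move=> xm.
have -> : [set a : {set T} | #|a| == m & x \subset a] =
    (fun b => b :|: x) @: [set b : {set T} | b \subset ~: x & #|b| == m - #|x|].
  apply/setP => a; rewrite inE; apply/andP/imsetP => [[/eqP am xa] | [b]].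
    exists (a :\: x); last by rewrite -{1}(setID a x) (setIidPr xa) setUC.
    by rewrite inE subsetDr cardsD (setIidPr xa) am /=.
  rewrite inE -disjoints_subset => /andP[bx /eqP bm] ->.
  split; last exact: subsetUr.
  by rewrite cardsU (disjoint_setI0 bx) cards0 subn0 bm subnK.
rewrite card_in_imset; first by rewrite cards_draws cardsCs setCK.
move=> b1 b2; rewrite !inE -!disjoints_subset => /andP[b1x _] /andP[b2x _] e.
have setUDK (b : {set T}) : [disjoint b & x] -> (b :|: x) :\: x = b.
  by move=> bx; rewrite setDUl setDv setU0 (setDidPl bx).
by rewrite -(setUDK _ b1x) e setUDK.
Qed.
End FiniteSets.

Definition uncovered (G : nat) (F : {set {set 'I_G}}) (x : {set 'I_G}) :=
  [forall a in F, ~~ (x \subset a)].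

HB.instance Definition _ := SemiGroup.isComLaw.Build nat minn minnA minnC.

Section Norm2.
Variable G : nat.
Implicit Types (F : {set {set 'I_G}}) (x : {set 'I_G}).

Lemma norm2_le F x : uncovered F x -> (norm2 F <= #|x|)%N.
Proof. by move=> Fx; rewrite /norm2 (bigD1 x) //= geq_minl. Qed.

Lemma norm2_ge F k : (k <= G.+1)%N ->
  (forall y, uncovered F y -> k <= #|y|)%N -> (k <= norm2 F)%N.
Proof.
move=> kG Fk; apply: (big_ind (fun m => k <= m)%N) => //.
by move=> m1 m2; rewrite leq_min => -> ->.
Qed.

Lemma norm2_leP F k : (k <= G)%N ->
  reflect (exists2 x, uncovered F x & #|x| <= k)%N (norm2 F <= k)%N.
Proof.
move=> kG; apply: (iffP idP) => [|[x Fx xk]]; last exact: leq_trans (norm2_le Fx) xk.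
move=> normF; apply/exists_inP; apply: contraTT normF.
rewrite negb_exists_in => /forall_inP noFx; rewrite -ltnNge.
by apply: norm2_ge => // y Fy; rewrite ltnNge; apply: noFx.
Qed.
End Norm2.

Section DrawRatio.
Variable R : numFieldType.
Local Open Scope ring_scope.

Lemma bin_ratio_prod (G H j : nat) : (j <= H <= G)%N ->
  ('C(G - j, H - j)%:R / 'C(G, H)%:R : R) =
  \prod_(i < j) ((H - i)%:R / (G - i)%:R).
Proof.
elim: j => [|j IH] /andP[jH HG].
  by rewrite !subn0 big_ord0 divff // pnatr_eq0 -lt0n bin_gt0.
rewrite big_ord_recr /= -IH ?HG ?(ltnW jH) //.
have Gj : (G - j)%:R != 0 :> R by rewrite pnatr_eq0 subn_eq0 -ltnNge (leq_trans jH HG).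
have := mul_bin_diag (G - j) (H - j.+1).
have -> : (G - j).-1 = (G - j.+1)%N by lia.
have -> : (H - j.+1).+1 = (H - j)%N by lia.
move=> Pascal.
have -> : 'C(G - j.+1, H - j.+1)%:R = 'C(G - j, H - j)%:R * (H - j)%:R / (G - j)%:R :> R.
  by rewrite -natrM mulnC -Pascal natrM mulrC mulKf.
by ring.
Qed.

Lemma prod_ratio_antitone (G H j k : nat) : (H <= G)%N -> (j <= k)%N ->
  \prod_(i < k) ((H - i)%:R / (G - i)%:R) <= \prod_(i < j) ((H - i)%:R / (G - i)%:R) :> R.
Proof.
move=> HG jk; set f := fun i : nat => (H - i)%:R / (G - i)%:R : R.
have f01 i : 0 <= f i <= 1.
  rewrite /f divr_ge0 ?ler0n //=; have [->|Gi] := eqVneq (G - i)%N 0%N.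
    by rewrite invr0 mulr0.
  by rewrite ler_pdivrMr ?ltr0n ?lt0n // mul1r ler_nat leq_sub2r.
rewrite -!(big_mkord xpredT f) (big_cat_nat (leq0n j) jk) /=.
rewrite ler_piMr ?prodr_ge0 ?prodr_ile1 // => i _; first by case/andP: (f01 i).
Qed.
End DrawRatio.

Definition ksets_above (G H : nat) (x : {set 'I_G}) : {set {set 'I_G}} :=
  [set a in ksets G H | x \subset a].

Section KSets.
Variables G H : nat.
Implicit Types (F : {set {set 'I_G}}) (x y : {set 'I_G}).
Local Notation X := (ksets G H).
Local Notation notabove x := (X :\: ksets_above H x).

Lemma card_ksets : #|X| = 'C(G, H).
Proof. by rewrite card_draws card_ord. Qed.

Lemma card_ksets_above x : (#|x| <= H)%N -> #|ksets_above H x| = 'C(G - #|x|, H - #|x|).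
Proof.
move=> xH; rewrite -[G in 'C(G - _, _)]card_ord -card_supsets //.
by apply: eq_card => a; rewrite !inE.
Qed.

Lemma ratio_ksets_notabove (R : numFieldType) x : (#|x| <= H <= G)%N ->
  ((#|notabove x|%:R / #|X|%:R : R) = 1 - \prod_(i < #|x|) ((H - i)%:R / (G - i)%:R))%R.
Proof.
move=> /andP[xH HG].
have aboveX : ksets_above H x \subset X by apply/subsetP => a; rewrite inE => /andP[].
rewrite cardsD (setIidPr aboveX) natrB ?subset_leq_card // mulrBl divff; last first.
  by rewrite card_ksets pnatr_eq0 -lt0n bin_gt0.
by rewrite card_ksets_above // card_ksets bin_ratio_prod ?xH.
Qed.

Lemma uncovered_notabove x : uncovered (notabove x) x.
Proof. by apply/forall_inP => a; rewrite !inE; case: (x \subset a); rewrite ?andbT ?andNb. Qed.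

Lemma ratio_le_of_norm2_le (R : numFieldType) F k : F \subset X ->
  (norm2 F <= k <= H)%N -> (H <= G)%N ->
  ((#|F|%:R / #|X|%:R : R) <= 1 - \prod_(i < k) ((H - i)%:R / (G - i)%:R))%R.
Proof.
move=> FX /andP[Fk kH] HG.
have /(norm2_leP F (leq_trans kH HG))[x /forall_inP Fx xk] := Fk.
have F_notabove : F \subset notabove x.
  apply/subsetP => a aF; have := subsetP FX a aF.
  by rewrite !inE => ->; rewrite andbT Fx.
apply: (@le_trans _ _ (#|notabove x|%:R / #|X|%:R)%R).
  by rewrite ler_wpM2r ?invr_ge0 ?ler0n // ler_nat subset_leq_card.
rewrite ratio_ksets_notabove ?HG ?(leq_trans xk kH) // lerD2l lerN2.
exact: prod_ratio_antitone.
Qed.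

Hypothesis HG : (H < G)%N.

Lemma notabove_cover x y : ~~ (x \subset y) -> (#|y| <= H)%N ->
  exists2 a, a \in notabove x & y \subset a.
Proof.
case/subsetPn => z zx zy yH.
have yCz : y \subset ~: [set z] by rewrite subsetC sub1set inE.
have yHz : (#|y| <= H <= #|[set~ z]|)%N.
  by rewrite yH cardsC1 card_ord -ltnS (ltn_predK HG).
have [a [ya aCz aH]] := exists_card_between yCz yHz.
exists a => //; rewrite !inE aH eqxx andbT /=; apply: contraTN aCz => xa.
by rewrite subsetC sub1set !inE negbK (subsetP xa).
Qed.

Lemma norm2_notabove x : (#|x| <= H)%N -> norm2 (notabove x) = #|x|.
Proof.
move=> xH; apply/eqP; rewrite eqn_leq norm2_le ?uncovered_notabove //=.
apply: norm2_ge => [|y /forall_inP yF]; first exact: leqW (leq_trans xH (ltnW HG)).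
rewrite leqNgt; apply/negP => yx.
have xy : ~~ (x \subset y) by apply: contraL yx => /subset_leq_card; rewrite -leqNgt.
have [a aF ya] := notabove_cover xy (leq_trans (ltnW yx) xH).
by move: (yF a aF); rewrite ya.
Qed.

Lemma ratio_notabove_extremal (R : numFieldType) k : (k <= H)%N ->
  exists Fs : {set {set 'I_G}},
    [/\ Fs \subset X, norm2 Fs = k &
      ((#|Fs|%:R / #|X|%:R : R) = 1 - \prod_(i < k) ((H - i)%:R / (G - i)%:R))%R].
Proof.
move=> kH; have kG : (#|set0 : {set 'I_G}| <= k <= #|[set: 'I_G]|)%N.
  by rewrite cards0 cardsT card_ord (leq_trans kH (ltnW HG)).
have [x [_ _ xk]] := exists_card_between (sub0set setT) kG.
exists (notabove x).
by rewrite subsetDl norm2_notabove ?ratio_ksets_notabove ?xk ?kH ?(ltnW HG).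
Qed.
End KSets.

Theorem proposition4p9 (n G : nat) :
  (0 < n)%N -> (0 < G)%N -> (2 ^ n %| G)%N ->
  forall k : nat, (1 <= k <= G %/ 2 ^ n)%N ->
  (forall F : {set {set 'I_G}},
      F \subset ksets G (G %/ 2 ^ n) -> F != set0 -> (norm2 F <= k)%N ->
      ((#|F|%:R / #|ksets G (G %/ 2 ^ n)|%:R : rat) <=
        1 - \prod_(i < k) (((G %/ 2 ^ n) - i)%:R / (G - i)%:R))%R)
  /\
  (exists Fs : {set {set 'I_G}},
      [/\ Fs \subset ksets G (G %/ 2 ^ n), norm2 Fs = k &
        (#|Fs|%:R / #|ksets G (G %/ 2 ^ n)|%:R : rat) =
        (1 - \prod_(i < k) (((G %/ 2 ^ n) - i)%:R / (G - i)%:R))%R]).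
Proof.
move=> n_gt0 G_gt0 _ k /andP[_ kH].
have HG : (G %/ 2 ^ n < G)%N by rewrite ltn_Pdiv // -{1}(expn0 2) ltn_exp2l.
split; last exact: ratio_notabove_extremal.
move=> F FX _ Fk.
by apply: ratio_le_of_norm2_le; rewrite ?Fk ?kH ?(ltnW HG).
Qed.
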